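(* Let $(V,\mathcal H,\iota,W)$ be a generalized functional theory and $k$ a positive integer. Then $\mathrm{conv}_k(\iota^*(\mathcal P))=\bar\iota^*(\bar{\mathcal P})$, where $\bar\iota:V\to i\mathfrak u(\mathcal H\otimes\mathbb C^k)$, $\bar\iota(v)=\iota(v)\otimes\mathbb 1$, and $\bar{\mathcal P}$ is the set of pure states on $\mathcal H\otimes\mathbb C^k$.
   Context: A generalized functional theory is a tuple $(V,\mathcal H,\iota,W)$ with $V$ a finite-dimensional real vector space, $\mathcal H$ a finite-dimensional complex Hilbert space, $\iota:V\to i\mathfrak u(\mathcal H)$ linear into the Hermitian operators, $W$ Hermitian. Density operators on a Hilbert space $\mathcal K$ are regarded as elements of $(i\mathfrak u(\mathcal K))^*$ via the trace pairing; $\iota^*$ and $\bar\iota^*$ are the dual maps. $\mathcal P$ is the set of pure states (rank-one projectors) on $\mathcal H$. For a subset $X$ of a vector space, $\mathrm{conv}_k(X)=\{\sum_{i=1}^k t_is_i: s_i\in X, t_i\ge0,\sum_i t_i=1\}$. *)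

From HB Require Import structures.
From mathcomp Require Import all_boot all_order all_algebra.
From mathcomp Require Import complex mxtens.
Set Implicit Arguments.
Unset Strict Implicit.
Unset Printing Implicit Defensive.
Import Order.TTheory GRing.Theory Num.Theory.
Local Open Scope ring_scope.

Definition hermitian (R : rcfType) (n : nat) (A : 'M[R[i]]_n) : Prop :=
  map_mx (@conjc R) A^T = A.

Definition pure_state (R : rcfType) (n : nat) (P : 'M[R[i]]_n) : Prop :=
  hermitian P /\ P *m P = P /\ \rank P = 1%N.

Definition real_linear (R : rcfType) (V : vectType R) (n : nat)
  (iota : V -> 'M[R[i]]_n) : Prop :=
  forall (a : R) (v w : V),
    iota (a *: v + w) = (real_complex R a) *: iota v + iota w.

Definition gen_functional_theory (R : rcfType) (V : vectType R) (n : nat)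
  (iota : V -> 'M[R[i]]_n) (W : 'M[R[i]]_n) : Prop :=
  real_linear iota /\ (forall v, hermitian (iota v)) /\ hermitian W.

(* Dual map iota^* : density operator rho |-> (v |-> tr(rho iota(v))) in V^*,
   elements of V^* being represented as (linear) functions V -> R. *)
Definition dual_map (R : rcfType) (V : vectType R) (n : nat)
  (iota : V -> 'M[R[i]]_n) (rho : 'M[R[i]]_n) : V -> R :=
  fun v => complex.Re (\tr (rho *m iota v)).

Definition iota_bar (R : rcfType) (V : vectType R) (n k : nat)
  (iota : V -> 'M[R[i]]_n) : V -> 'M[R[i]]_(n * k) :=
  fun v => iota v *t (1%:M : 'M[R[i]]_k).

Definition conv_k (R : rcfType) (V : vectType R) (k : nat)
  (X : (V -> R) -> Prop) : (V -> R) -> Prop :=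
  fun f => exists (s : 'I_k -> V -> R) (t : 'I_k -> R),
    (forall i, X (s i)) /\ (forall i, 0 <= t i) /\ \sum_(i < k) t i = 1 /\
    f = (fun v => \sum_(i < k) t i * s i v).

(* Pure states are the dyads u u^* of unit vectors u, and the dual map sends
   such a dyad to v |-> <u, iota(v) u>.  Cut a unit vector w of C^n (x) C^k into
   its k blocks w_j in C^n.  As iota(v) (x) 1 acts blockwise,
   <w, (iota(v) (x) 1) w> = sum_j |w_j|^2 <e_j, iota(v) e_j> with e_j = w_j/|w_j|,
   a convex combination of k values of pure states; conversely the combination
   sum_j t_j <e_j, iota(v) e_j> comes from the blocks w_j = sqrt(t_j) e_j. *)

From Pilot Require Import Defs.
From HB Require Import structures.
From mathcomp Require Import all_boot all_order all_algebra.
From mathcomp Require Import complex mxtens ring.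
From Stdlib Require Import FunctionalExtensionality PropExtensionality.
Import Order.TTheory GRing.Theory Num.Theory.
Local Open Scope ring_scope.
Local Open Scope complex_scope.

Section PureStates.

Set Implicit Arguments.
Unset Strict Implicit.

Lemma big_mxtens_index (M : nmodType) n k (F : 'I_(n * k) -> M) :
  \sum_x F x = \sum_(j < k) \sum_(a < n) F (mxtens_index (a, j)).
Proof.
rewrite exchange_big pair_big /= (reindex (@mxtens_index n k)) /=.
  by apply: eq_bigr => -[a j].
by exists (@mxtens_unindex n k) => x _; rewrite (mxtens_indexK, mxtens_unindexK).
Qed.

(* [mxtens_index (a, j)] indexes e_a (x) e_j in C^n (x) C^k. *)
Definition slice T n k (u : 'I_(n * k) -> T) (j : 'I_k) : 'I_n -> T :=
  fun a => u (mxtens_index (a, j)).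

Definition unslice T n k (w : 'I_k -> 'I_n -> T) : 'I_(n * k) -> T :=
  fun x => w (mxtens_unindex x).2 (mxtens_unindex x).1.

Lemma slice_unslice T n k (w : 'I_k -> 'I_n -> T) j : slice (unslice w) j = w j.
Proof. by apply: functional_extensionality => a; rewrite /slice /unslice mxtens_indexK. Qed.

Variable R : rcfType.
Implicit Types (m : nat) (c : R).

Lemma real_complexM (c d : R) : (c * d)%:C = c%:C * d%:C.
Proof. exact: rmorphM. Qed.

Lemma real_complexX (c : R) n : (c ^+ n)%:C = c%:C ^+ n.
Proof. exact: rmorphXn. Qed.

Lemma conjcM (z w : R[i]) : conjc (z * w) = conjc z * conjc w.
Proof. exact: rmorphM. Qed.

Lemma Re_sum I (r : seq I) (F : I -> R[i]) :
  complex.Re (\sum_(j <- r) F j) = \sum_(j <- r) complex.Re (F j).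
Proof. exact: (@raddf_sum _ _ (@complex.Re R : Rcomplex R -> R)). Qed.

Lemma Re_realM c (z : R[i]) : complex.Re (c%:C * z) = c * complex.Re z.
Proof. by case: z => a b /=; rewrite mul0r subr0. Qed.

Lemma mulcJ_Re (z : R[i]) : (complex.Re (z * conjc z))%:C = z * conjc z.
Proof. by rewrite RRe_real // ger0_real // mulcJ_ge0. Qed.

Definition sqnorm m (u : 'I_m -> R[i]) : R := \sum_a complex.Re (u a * conjc (u a)).

Definition qform m (u : 'I_m -> R[i]) (A : 'M[R[i]]_m) : R[i] :=
  \sum_a \sum_b conjc (u a) * A a b * u b.

Definition dyad m (u : 'I_m -> R[i]) : 'M[R[i]]_m := \matrix_(a, b) (u a * conjc (u b)).

Lemma sqnormE m (u : 'I_m -> R[i]) : (sqnorm u)%:C = \sum_a u a * conjc (u a).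
Proof. by rewrite rmorph_sum; apply: eq_bigr => a _; exact: mulcJ_Re. Qed.

Lemma Re_mulcJ_ge0 (z : R[i]) : 0 <= complex.Re (z * conjc z).
Proof. by rewrite -ler0c mulcJ_Re mulcJ_ge0. Qed.

Lemma sqnorm_ge0 m (u : 'I_m -> R[i]) : 0 <= sqnorm u.
Proof. by apply: sumr_ge0 => a _; apply: Re_mulcJ_ge0. Qed.

Lemma sqnorm_eq0 m (u : 'I_m -> R[i]) : sqnorm u = 0 -> forall a, u a = 0.
Proof.
move/psumr_eq0P => /(_ (fun a _ => Re_mulcJ_ge0 _)) u0 a.
have /eqP := u0 a isT.
by rewrite -(inj_eq (@complexI R)) mulcJ_Re mulf_eq0 conjc_eq0 orbb => /eqP.
Qed.

Lemma sqnorm_dim_gt0 m (u : 'I_m -> R[i]) : sqnorm u = 1 -> (0 < m)%N.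
Proof. by case: m u => // u; rewrite /sqnorm big_ord0 => /eqP; rewrite eq_sym oner_eq0. Qed.

Lemma sqnorm_scale m c (u : 'I_m -> R[i]) :
  sqnorm (fun a => c%:C * u a) = c ^+ 2 * sqnorm u.
Proof.
apply: (@complexI R); rewrite real_complexM real_complexX !sqnormE mulr_sumr.
by apply: eq_bigr => a _; rewrite conjcM conjc_real; ring.
Qed.

Lemma Re_qform_scale m c (u : 'I_m -> R[i]) A :
  complex.Re (qform (fun a => c%:C * u a) A) = c ^+ 2 * complex.Re (qform u A).
Proof.
rewrite -Re_realM real_complexX /qform mulr_sumr; congr complex.Re.
apply: eq_bigr => a _; rewrite mulr_sumr; apply: eq_bigr => b _.
by rewrite conjcM conjc_real; ring.
Qed.

Lemma unit_vector_decomp m (u : 'I_m -> R[i]) : (0 < m)%N ->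
  exists2 e, sqnorm e = 1 & u = fun a => (Num.sqrt (sqnorm u))%:C * e a.
Proof.
move=> m_gt0; have [u0 | u_neq0] := eqVneq (sqnorm u) 0.
  pose a0 := Ordinal m_gt0.
  exists (fun a => (a == a0)%:R).
    apply: (@complexI R); rewrite sqnormE (bigD1 a0) // big1 ?eqxx ?conjc1 ?mulr1 //.
      exact: addr0.
    by move=> a /negbTE ->; rewrite mul0r.
  by apply: functional_extensionality => a; rewrite u0 sqrtr0 mul0r sqnorm_eq0.
have r_gt0 : 0 < Num.sqrt (sqnorm u) by rewrite sqrtr_gt0 lt_def u_neq0 sqnorm_ge0.
exists (fun a => (Num.sqrt (sqnorm u))^-1%:C * u a).
  by rewrite sqnorm_scale exprVn sqr_sqrtr ?sqnorm_ge0 ?mulVf.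
apply: functional_extensionality => a.
by rewrite mulrA -rmorphM mulfV ?gt_eqF // mul1r.
Qed.

Lemma mxtrace_dyadM m (u : 'I_m -> R[i]) A : \tr (dyad u *m A) = qform u A.
Proof.
rewrite /mxtrace /qform [RHS]exchange_big; apply: eq_bigr => a _.
by rewrite mxE; apply: eq_bigr => b _; rewrite mxE; ring.
Qed.

Lemma rank_dyad m (u : 'I_m -> R[i]) : sqnorm u != 0 -> \rank (dyad u) = 1%N.
Proof.
move=> u_neq0; apply/eqP; rewrite eqn_leq; apply/andP; split.
  have -> : dyad u = (\col_a u a) *m (\row_b conjc (u b)).
    by apply/matrixP => a b; rewrite !mxE big_ord1 !mxE.
  exact: leq_trans (mxrankM_maxl _ _) (rank_leq_col _).
rewrite lt0n mxrank_eq0; apply: contraNneq u_neq0 => u0.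
apply/eqP/(@complexI R); transitivity (\tr (dyad u)); last by rewrite u0 mxtrace0.
by rewrite sqnormE; apply: eq_bigr => a _; rewrite mxE.
Qed.

Lemma dyad_pure m (u : 'I_m -> R[i]) : sqnorm u = 1 -> pure_state (dyad u).
Proof.
move=> u1; split; [|split].
- by apply/matrixP => a b; rewrite !mxE conjcM conjcK mulrC.
- apply/matrixP => a c; rewrite !mxE.
  transitivity (u a * conjc (u c) * (sqnorm u)%:C); last by rewrite u1 mulr1.
  by rewrite sqnormE mulr_sumr; apply: eq_bigr => b _; rewrite !mxE; ring.
- by rewrite rank_dyad // u1 oner_neq0.
Qed.

Lemma hermitian_conj m (P : 'M[R[i]]_m) y z : Defs.hermitian P -> conjc (P y z) = P z y.
Proof. by move=> /matrixP /(_ z y); rewrite !mxE. Qed.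

Lemma pure_state_col_factor m (P : 'M[R[i]]_m) : pure_state P ->
  exists x, sqnorm (P^~ x) != 0 /\
    forall y z, P y z * (sqnorm (P^~ x))%:C = P y x * conjc (P z x).
Proof.
case=> P_herm [P_idem P_rank1].
have diagE x : P x x = (sqnorm (P^~ x))%:C.
  rewrite -{1}P_idem mxE sqnormE; apply: eq_bigr => y _.
  by rewrite hermitian_conj // mulrC.
have [x Px_neq0] : exists x, sqnorm (P^~ x) != 0.
  apply/existsP; apply: contraT => /existsPn P0; move: P_rank1.
  suff -> : P = 0 by rewrite mxrank0.
  by apply/matrixP => y z; rewrite mxE (sqnorm_eq0 (eqP (negPn (P0 z)))).
exists x; split => // y z.
have rowx_rank1 : \rank (row x P) = 1%N.
  rewrite rank_rV; case: eqP => // /matrixP /(_ 0 x) /eqP.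
  by rewrite !mxE diagE (inj_eq (@complexI R)) (negbTE Px_neq0).
have : (P <= row x P)%MS.
  have := mxrank_leqif_eq (row_sub x P); rewrite rowx_rank1 P_rank1 => -[_].
  by rewrite eqxx => /esym /andP [].
case/submxP => D P_eq.
have PE y' z' : P y' z' = D y' 0 * P x z'.
  by rewrite {1}P_eq mxE big_ord1 mxE.
by rewrite -diagE hermitian_conj // PE [P y x]PE mulrAC.
Qed.

Lemma pure_state_dyad m (P : 'M[R[i]]_m) : pure_state P ->
  exists2 e, sqnorm e = 1 & P = dyad e.
Proof.
move=> P_pure; have [x [Px_neq0 P_factor]] := pure_state_col_factor P_pure.
have [e e1 PxE] := unit_vector_decomp (P^~ x) (leq_trans (ltn0Sn _) (ltn_ord x)).
exists e => //; apply/matrixP => y z; rewrite mxE.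
set s := sqnorm (P^~ x) in Px_neq0 P_factor PxE *.
have s_ge0 : 0 <= s := sqnorm_ge0 _.
have Pcol a : P a x = (Num.sqrt s)%:C * e a by rewrite [LHS](congr1 (fun u => u a) PxE).
apply: (mulIf (_ : s%:C != 0)); first by rewrite (inj_eq (@complexI R)).
rewrite P_factor !Pcol conjcM conjc_real -[in RHS](sqr_sqrtr s_ge0) real_complexX.
ring.
Qed.

Lemma dual_map_dyad (V : vectType R) m (iota : V -> 'M[R[i]]_m) u v :
  dual_map iota (dyad u) v = complex.Re (qform u (iota v)).
Proof. by rewrite /dual_map mxtrace_dyadM. Qed.

Lemma sqnorm_slices n k (u : 'I_(n * k) -> R[i]) :
  sqnorm u = \sum_j sqnorm (slice u j).
Proof. by rewrite /sqnorm big_mxtens_index. Qed.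

Lemma qform_tensmx1 n k (u : 'I_(n * k) -> R[i]) A :
  qform u (A *t (1%:M : 'M_k)) = \sum_j qform (slice u j) A.
Proof.
rewrite /qform big_mxtens_index; apply: eq_bigr => j _; apply: eq_bigr => a _.
rewrite big_mxtens_index (bigD1 j) //= [X in _ + X]big1 ?addr0.
  by apply: eq_bigr => b _; rewrite tensmxE mxE eqxx mulr1.
move=> l l_neq_j; apply: big1 => b _.
by rewrite tensmxE mxE eq_sym (negbTE l_neq_j) mulr0 mulr0 mul0r.
Qed.

Variable V : vectType R.

Definition dual_image_pure m (iota : V -> 'M[R[i]]_m) : (V -> R) -> Prop :=
  fun f => exists P, pure_state P /\ f = dual_map iota P.

Lemma dual_image_pureP m (iota : V -> 'M[R[i]]_m) f :
  dual_image_pure iota f <-> exists2 u, sqnorm u = 1 & f = dual_map iota (dyad u).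
Proof.
split => [[P [/pure_state_dyad [u u1 ->] ->]] | [u u1 ->]]; first by exists u.
by exists (dyad u); split => //; apply: dyad_pure.
Qed.

Lemma conv_k_sub_dual_image_tens n k (iota : V -> 'M[R[i]]_n) f :
  conv_k k (dual_image_pure iota) f -> dual_image_pure (iota_bar k iota) f.
Proof.
case=> [s [t [s_pure [t_ge0 [t_sum1 ->]]]]].
have /fin_all_exists [U U_spec] : forall j, exists u : 'I_n -> R[i],
    sqnorm u = 1 /\ s j = dual_map iota (dyad u).
  by move=> j; have /dual_image_pureP [u u1 ->] := s_pure j; exists u.
apply/dual_image_pureP; exists (unslice (fun j a => (Num.sqrt (t j))%:C * U j a)).
  rewrite sqnorm_slices -t_sum1; apply: eq_bigr => j _.
  by rewrite slice_unslice sqnorm_scale sqr_sqrtr // (U_spec j).1 mulr1.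
apply: functional_extensionality => v.
rewrite dual_map_dyad qform_tensmx1 Re_sum; apply: eq_bigr => j _.
by rewrite slice_unslice Re_qform_scale sqr_sqrtr // (U_spec j).2 dual_map_dyad.
Qed.

Lemma dual_image_tens_sub_conv_k n k (iota : V -> 'M[R[i]]_n) f :
  dual_image_pure (iota_bar k iota) f -> conv_k k (dual_image_pure iota) f.
Proof.
case/dual_image_pureP => w w1 ->.
have n_gt0 : (0 < n)%N by move/sqnorm_dim_gt0: w1; rewrite muln_gt0 => /andP [].
pose t j := sqnorm (slice w j).
have /fin_all_exists [U U_spec] : forall j, exists u : 'I_n -> R[i],
    sqnorm u = 1 /\ slice w j = fun a => (Num.sqrt (t j))%:C * u a.
  by move=> j; have [e e1 ->] := unit_vector_decomp (slice w j) n_gt0; exists e.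
exists (fun j => dual_map iota (dyad (U j))), t; split; [|split; [|split]].
- by move=> j; apply/dual_image_pureP; exists (U j); first exact: (U_spec j).1.
- by move=> j; apply: sqnorm_ge0.
- by rewrite -sqnorm_slices.
apply: functional_extensionality => v.
rewrite dual_map_dyad qform_tensmx1 Re_sum; apply: eq_bigr => j _.
by rewrite (U_spec j).2 Re_qform_scale sqr_sqrtr ?sqnorm_ge0 // dual_map_dyad.
Qed.

End PureStates.

Theorem lemma2p38 (R : rcfType) (V : vectType R) (n : nat)
  (iota : V -> 'M[R[i]]_n) (W : 'M[R[i]]_n) (k : nat) :
  gen_functional_theory iota W -> (0 < k)%N ->
  conv_k k (fun f => exists P : 'M[R[i]]_n, pure_state P /\ f = dual_map iota P)
  = (fun f => exists P : 'M[R[i]]_(n * k),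
        pure_state P /\ f = dual_map (iota_bar k iota) P).
Proof.
move=> _ _; apply: functional_extensionality => f; apply: propositional_extensionality.
split; [exact: conv_k_sub_dual_image_tens | exact: dual_image_tens_sub_conv_k].
Qed.
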